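(* If $(X_{n})$ is a nondecreasing sequence of subsets of $\mathbb{R}^{N}$, then $\mu_{N}(\overline{B}_{\cup_n X_{n}})=\lim_n \mu_{N}(\overline{B}_{X_{n}})=\sup_n \mu_{N}(\overline{B}_{X_{n}})$.
   Context: $\mu_N$ is $N$-dimensional Lebesgue measure. For nonempty bounded $X\subset\mathbb{R}^N$, $\overline{B}_X$ (the enclosing ball) is the unique closed ball of minimal diameter containing $X$; $\overline{B}_X:=\mathbb{R}^N$ if $X$ is unbounded; $\overline{B}_\emptyset:=\{0\}$. *)

From HB Require Import structures.
From mathcomp Require Import all_boot all_order all_algebra.
From mathcomp Require Import all_classical all_reals all_analysis.
Set Implicit Arguments. Unset Strict Implicit. Unset Printing Implicit Defensive.
Import Order.TTheory GRing.Theory Num.Theory.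
Local Open Scope classical_set_scope.
Local Open Scope ring_scope.

Section Defs.
Variables (R : realType) (N : nat).
Notation V := 'rV[R]_N.

Definition edist (x y : V) : R :=
  Num.sqrt (\sum_(i < N) (x ord0 i - y ord0 i) ^+ 2).

Definition cball (c : V) (r : R) : set V := [set y | edist c y <= r].

Definition ebounded (X : set V) : Prop :=
  exists M : R, forall x, X x -> edist 0 x <= M.

Definition is_min_ball (X : set V) (B : set V) : Prop :=
  exists c r, 0 <= r /\ B = cball c r /\ X `<=` cball c r /\
    (forall c' r', 0 <= r' -> X `<=` cball c' r' -> r <= r').

Definition enclosing_ball (X : set V) : set V :=
  if pselect (X = set0) is left _ then [set 0]
  else if pselect (ebounded X) is left _ then xget setT (is_min_ball X)
  else setT.

(** Lebesgue (outer) measure on R^N: infimum of total volumes of countable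
    covers by closed boxes [a,b] = prod_i [a_i, b_i]. *)
Definition box (a b : V) : set V :=
  [set x | forall i : 'I_N, a ord0 i <= x ord0 i <= b ord0 i].

Definition box_vol (a b : V) : R :=
  \prod_(i < N) Num.max (b ord0 i - a ord0 i) 0.

Definition lebN (A : set V) : \bar R :=
  ereal_inf [set s | exists a b : nat -> V,
     A `<=` \bigcup_k box (a k) (b k) /\
     s = (\sum_(0 <= k <oo) (box_vol (a k) (b k))%:E)%E].

End Defs.

(* The enclosing ball of a nonempty bounded set is a ball whose radius is the
   circumradius (the infimum of the radii of balls containing the set): by the
   parallelogram law, two balls of radii [r <= r'] containing a set of
   circumradius [rho] have centers at distance at most [2 sqrt (r'^2 - rho^2)],
   so centers of nearly optimal balls form a Cauchy sequence. Its measure is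
   [r ^ N] times that of the unit ball. Along a nondecreasing sequence [X n] the
   circumradii increase to some [s], and the same estimate makes the centers of
   the optimal balls of the [X n] converge to the center of a ball of radius [s]
   containing the union; so the circumradius, hence the measure, is continuous
   along the sequence. If the union is unbounded, either some [X n] is unbounded
   or the circumradii, hence the measures, are unbounded. *)
From HB Require Import structures.
From mathcomp Require Import all_boot all_order all_algebra.
From mathcomp Require Import all_classical all_reals all_analysis.
From mathcomp Require Import ring lra.
Import numFieldNormedType.Exports.
Set Implicit Arguments. Unset Strict Implicit. Unset Printing Implicit Defensive.
Import Order.TTheory GRing.Theory Num.Theory.
Local Open Scope classical_set_scope.
Local Open Scope ring_scope.

Section EnclosingBalls.
Variables (R : realType) (N : nat).
Notation V := 'rV[R]_N.
Implicit Types (X : nat -> set V) (Y Z : set V) (c x y : V) (r s : R).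

Definition d2 x y : R := \sum_(i < N) (x ord0 i - y ord0 i) ^+ 2.

Lemma d2_ge0 x y : 0 <= d2 x y.
Proof. by apply: sumr_ge0 => i _; exact: sqr_ge0. Qed.

Lemma coord_sqr_le_d2 x y (i : 'I_N) : (x ord0 i - y ord0 i) ^+ 2 <= d2 x y.
Proof. by rewrite /d2 (bigD1 i) //= lerDl sumr_ge0 // => j _; exact: sqr_ge0. Qed.

Lemma d2_triangle x y z : d2 x z <= 2 * d2 x y + 2 * d2 y z.
Proof.
rewrite /d2 !mulr_sumr -big_split /=; apply: ler_sum => i _.
rewrite -[x ord0 i - z ord0 i](subrKA (y ord0 i)).
move: (x ord0 i - y ord0 i) (y ord0 i - z ord0 i) => a b.
have := sqr_ge0 (a - b); rewrite !expr2; nra.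
Qed.

Lemma d2_scale c x y r : d2 (c + r *: x) (c + r *: y) = r ^+ 2 * d2 x y.
Proof.
rewrite /d2 mulr_sumr; apply: eq_bigr => i _; rewrite !mxE -exprMn.
by congr (_ ^+ 2); ring.
Qed.

(* The parallelogram law, centred at the midpoint of [c] and [c']. *)
Lemma d2_midpoint c c' y :
  d2 (2^-1 *: (c + c')) y = (d2 c y + d2 c' y) / 2 - d2 c c' / 4.
Proof.
rewrite /d2 -big_split !big_distrl -sumrB /=.
by apply: eq_bigr => i _; rewrite !mxE; field.
Qed.

Lemma cballP c r y : cball c r y <-> 0 <= r /\ d2 c y <= r ^+ 2.
Proof.
rewrite /cball /edist /=; split => [h|[r0 h]].
  have r0 : 0 <= r by apply: le_trans h; exact: sqrtr_ge0.
  by split => //; move: h; rewrite -{1}(ger0_norm r0) -sqrtr_sqr ler_sqrt // sqr_ge0.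
by rewrite -[r]ger0_norm // -sqrtr_sqr ler_sqrt // sqr_ge0.
Qed.

Lemma le_cball c r r' : r <= r' -> cball c r `<=` cball c r'.
Proof. by move=> rr' y /= /le_trans; apply. Qed.

Lemma cball0 c : cball c 0 = [set c].
Proof.
apply/seteqP; split => [y /cballP[_]|_ ->]; last first.
  by apply/cballP; split => //; rewrite /d2 big1 // => i _; rewrite subrr expr0n.
rewrite expr0n /= => cy; apply/rowP => i.
have : (c ord0 i - y ord0 i) ^+ 2 == 0.
  by rewrite eq_le sqr_ge0 (le_trans (coord_sqr_le_d2 _ _ i) cy).
by rewrite sqrf_eq0 subr_eq0 => /eqP->.
Qed.

Lemma image_cball c c' r r' : 0 < r ->
  [set c + r *: x | x in cball c' r'] = cball (c + r *: c') (r * r').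
Proof.
move=> r0; apply/seteqP; split => [_ [x /cballP[r'0 c'x] <-]|y /cballP[rr'0 yr]].
  apply/cballP; split; first by rewrite mulr_ge0 // ltW.
  by rewrite d2_scale exprMn ler_wpM2l ?sqr_ge0.
have y_image : c + r *: (r^-1 *: (y - c)) = y.
  by rewrite scalerA mulfV ?gt_eqF // scale1r addrC subrK.
exists (r^-1 *: (y - c)) => //; apply/cballP; split; first by rewrite -(pmulr_rge0 _ r0).
by rewrite -(ler_pM2l (exprn_gt0 2 r0)) -(d2_scale c) y_image -exprMn.
Qed.

Lemma bigcup_cball0 : \bigcup_(j : nat) cball (0 : V) j%:R = setT.
Proof.
apply/seteqP; split => // y _; exists (Num.trunc (d2 0 y)).+1 => //.
apply/cballP; split => //; apply: le_trans (ltW (truncnS_gt _)) _.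
by apply: ler_eXnr => //; rewrite ler1n.
Qed.

Lemma cball_ebounded c r : ebounded (cball c r).
Proof.
exists (Num.sqrt (2 * d2 0 c + 2 * r ^+ 2)) => y /cballP[_ cy].
change (Num.sqrt (d2 0 y) <= Num.sqrt (2 * d2 0 c + 2 * r ^+ 2)).
rewrite ler_sqrt.
  by apply: le_trans (d2_triangle 0 c y) _; rewrite lerD2l ler_wpM2l.
by rewrite addr_ge0 // mulr_ge0 ?d2_ge0 ?sqr_ge0.
Qed.

Lemma sub_ebounded Y Z : Y `<=` Z -> ebounded Z -> ebounded Y.
Proof. by move=> YZ [M ZM]; exists M => x /YZ /ZM. Qed.

Lemma cvg_exprn (u : nat -> R) (l : R) n :
  u @ \oo --> l -> (fun k => u k ^+ n) @ \oo --> l ^+ n.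
Proof. exact: continuous_cvg (@exprn_continuous R n l). Qed.

(* When [Y] is unbounded this is the junk value [inf set0 = 0]. *)
Definition circumradius Y : R :=
  inf [set r | 0 <= r /\ exists c, Y `<=` cball c r].

Lemma circumradius_ge0 Y : 0 <= circumradius Y.
Proof.
rewrite /circumradius; set S := [set r | _].
have [->|/set0P S0] := eqVneq S set0; first by rewrite inf0.
by apply: lb_le_inf => // r [].
Qed.

Lemma circumradius_le Y c r : 0 <= r -> Y `<=` cball c r -> circumradius Y <= r.
Proof. by move=> r0 Yc; apply: ge_inf; [exists 0 => s [] | split => //; exists c]. Qed.

(* Both balls contain [Y], so by the parallelogram law so does a smaller ball
   around the midpoint of their centers; its radius is at least [circumradius Y]. *)
Lemma d2_centers_le Y c c' r r' : Y !=set0 ->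
  Y `<=` cball c r -> Y `<=` cball c' r' ->
  d2 c c' <= 4 * (Num.max r r' ^+ 2 - circumradius Y ^+ 2).
Proof.
move=> [y0 Yy0] Yc Yc'.
set M := Num.max r r'; set T := M ^+ 2 - d2 c c' / 4.
have mid y : Y y -> d2 (2^-1 *: (c + c')) y <= T.
  move=> Yy; have [r0 cy] := (cballP _ _ _).1 (Yc _ Yy).
  have [r'0 c'y] := (cballP _ _ _).1 (Yc' _ Yy).
  have M0 : 0 <= M by rewrite le_max r0.
  have rM : r ^+ 2 <= M ^+ 2 by rewrite lerXn2r ?nnegrE // le_max lexx.
  have r'M : r' ^+ 2 <= M ^+ 2 by rewrite lerXn2r ?nnegrE // le_max lexx orbT.
  rewrite d2_midpoint /T; lra.
have T0 : 0 <= T := le_trans (d2_ge0 _ _) (mid _ Yy0).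
have : circumradius Y <= Num.sqrt T.
  apply: (@circumradius_le _ (2^-1 *: (c + c'))); first exact: sqrtr_ge0.
  by move=> y Yy; apply/cballP; rewrite sqrtr_ge0 sqr_sqrtr //; split => //; exact: mid.
rewrite -(ler_sqr (x := circumradius Y)) ?nnegrE ?circumradius_ge0 ?sqrtr_ge0 // sqr_sqrtr // /T.
lra.
Qed.

Lemma cauchy_centers_cball Y (c : nat -> V) (e r : nat -> R) s : 0 <= s ->
  e @ \oo --> 0 -> (forall n m, (n <= m)%N -> d2 (c n) (c m) <= e n) ->
  r @ \oo --> s ->
  (forall y, Y y -> \forall n \near \oo, d2 (c n) y <= r n ^+ 2) ->
  exists c0, Y `<=` cball c0 s.
Proof.
move=> s0 e0 ce rs Yr.
have coord_cvg (i : 'I_N) : cvgn (fun n => c n ord0 i).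
  apply/cauchy_cvgP/cauchy_exP => eps eps0.
  have [n0 _ en0] := (cvgrPdist_lt _ _).1 e0 (eps ^+ 2) (exprn_gt0 2 eps0).
  exists (c n0 ord0 i); exists n0 => // n /= n0n; rewrite /ball /=.
  have en0_lt : e n0 < eps ^+ 2.
    by apply: le_lt_trans (en0 n0 (leqnn n0)); rewrite sub0r normrN ler_norm.
  have : `|c n0 ord0 i - c n ord0 i| ^+ 2 < eps ^+ 2.
    rewrite real_normK ?num_real //; apply: le_lt_trans en0_lt.
    exact: le_trans (coord_sqr_le_d2 _ _ i) (ce _ _ n0n).
  by rewrite ltr_pXn2r // ?nnegrE // ltW.
pose c0 : V := \row_i lim ((fun n => c n ord0 i) @ \oo).
exists c0 => y Yy; apply/cballP; split => //.
have d2_cvg : (fun n => d2 (c n) y) @ \oo --> d2 c0 y.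
  apply: (@cvg_big _ _ +%R 0 predT) => //; first exact: add_continuous.
  move=> i _; rewrite /c0 mxE; apply: cvg_exprn.
  by apply: cvgB; [exact: coord_cvg | exact: cvg_cst].
exact: ler_cvg_to d2_cvg (cvg_exprn rs) (Yr y Yy).
Qed.

Lemma exists_cball_circumradius Y : ebounded Y ->
  exists c, Y `<=` cball c (circumradius Y).
Proof.
move=> [M YM]; have [->|/set0P[y0 Yy0]] := eqVneq Y set0; first by exists 0.
set rho := circumradius Y.
have inf_radii : has_inf [set r | 0 <= r /\ exists c, Y `<=` cball c r].
  split; last by exists 0 => r [].
  by exists M; split; [exact: le_trans (sqrtr_ge0 _) (YM _ Yy0) | exists 0].
pose t n := rho + n.+1%:R^-1.
have /choice[c Yc] n : exists c, Y `<=` cball c (t n).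
  have [u [_ [c Yc]] /ltW ut] := @inf_adherent R _ n.+1%:R^-1 ltac:(by []) inf_radii.
  by exists c; apply: subset_trans Yc (le_cball ut).
have t_cvg : t @ \oo --> rho.
  by rewrite -[rho]addr0; apply: cvgD; [exact: cvg_cst | exact: cvg_harmonic].
apply: (@cauchy_centers_cball _ c (fun n => 4 * (t n ^+ 2 - rho ^+ 2)) t).
- exact: circumradius_ge0.
- rewrite -(mulr0 4) -(subrr (rho ^+ 2)).
  by apply: cvgMr; apply: cvgB; [exact: cvg_exprn t_cvg | exact: cvg_cst].
- move=> n m nm; have := d2_centers_le (ex_intro _ y0 Yy0) (Yc n) (Yc m).
  by rewrite max_l // lerD2l lef_pV2 ?posrE ?ler_nat.
- exact: t_cvg.
- by move=> y Yy; apply: nearW => n; have /cballP[] := Yc n y Yy.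
Qed.

Lemma le_circumradius Y Z : Y `<=` Z -> ebounded Z ->
  circumradius Y <= circumradius Z.
Proof.
move=> YZ /exists_cball_circumradius[c Zc].
exact: circumradius_le (circumradius_ge0 _) (subset_trans YZ Zc).
Qed.

Lemma bigcup_sub_cball X s : {homo X : n m / (n <= m)%N >-> n `<=` m} ->
  (forall n, ebounded (X n)) -> (forall n, circumradius (X n) <= s) ->
  exists c, \bigcup_n X n `<=` cball c s.
Proof.
move=> Xmono Xb Xs.
have [->|/set0P[x0 [n0 _ Xx0]]] := eqVneq (\bigcup_n X n) set0; first by exists 0.
pose Z k := X (k + n0)%N; pose r k := circumradius (Z k).
have Zmono k k' : (k <= k')%N -> Z k `<=` Z k'.
  by move=> kk'; apply: Xmono; rewrite leq_add2r.
have Zne k : Z k !=set0 by exists x0; apply: (Xmono n0) Xx0; exact: leq_addl.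
have /choice[c Zc] k : exists c, Z k `<=` cball c (r k).
  exact: exists_cball_circumradius (Xb _).
have r_mono : nondecreasing_seq r.
  by move=> k k' kk'; apply: le_circumradius (Zmono _ _ kk') (Xb _).
have r_sup : has_sup (range r).
  by split; [exists (r 0%N), 0%N | exists s => _ [k _ <-]; exact: Xs].
set s' := sup (range r).
have r_le k : r k <= s' by apply: sup_upper_bound => //; exists k.
have s'0 : 0 <= s' := le_trans (circumradius_ge0 _) (r_le 0%N).
have s's : s' <= s.
  by apply: ge_sup; [exists (r 0%N), 0%N | move=> _ [k _ <-]; exact: Xs].
have r_cvg : r @ \oo --> s' := nondecreasing_cvgn r_mono r_sup.2.
have [c0 Uc0] : exists c0, \bigcup_n X n `<=` cball c0 s'.
  apply: (@cauchy_centers_cball _ c (fun k => 4 * (s' ^+ 2 - r k ^+ 2)) r).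
  - exact: s'0.
  - rewrite -(mulr0 4) -(subrr (s' ^+ 2)).
    by apply: cvgMr; apply: cvgB; [exact: cvg_cst | exact: cvg_exprn r_cvg].
  - move=> k k' kk'.
    have := d2_centers_le (Zne k) (Zc k) (subset_trans (Zmono _ _ kk') (Zc k')).
    rewrite max_r ?r_mono // => /le_trans; apply; rewrite ler_wpM2l // lerD2r.
    by rewrite lerXn2r ?nnegrE ?r_le //; exact: circumradius_ge0.
  - exact: r_cvg.
  - move=> y [n _ Xy]; exists n => // k /= nk.
    suff /(Zc k)/cballP[] : Z k y by [].
    by apply: (Xmono n) Xy; exact: leq_trans nk (leq_addr _ _).
by exists c0; apply: subset_trans Uc0 (le_cball s's).
Qed.

Lemma cvg_circumradius_bigcup X : {homo X : n m / (n <= m)%N >-> n `<=` m} ->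
  ebounded (\bigcup_n X n) ->
  (fun n => circumradius (X n)) @ \oo --> circumradius (\bigcup_n X n).
Proof.
move=> Xmono Ub; set U := \bigcup_n X n; set r := fun n => circumradius (X n).
have XU n : X n `<=` U by move=> x Xx; exists n.
have Xb n : ebounded (X n) := sub_ebounded (XU n) Ub.
have r_mono : nondecreasing_seq r.
  by move=> n m nm; apply: le_circumradius (Xmono _ _ nm) (Xb _).
have rU n : r n <= circumradius U by exact: le_circumradius.
have r_sup : has_sup (range r).
  by split; [exists (r 0%N), 0%N | exists (circumradius U) => _ [n _ <-]].
have r_le n : r n <= sup (range r) by apply: sup_upper_bound => //; exists n.
suff -> : circumradius U = sup (range r) by exact: nondecreasing_cvgn r_mono r_sup.2.
apply/le_anti/andP; split.
  have [c Uc] := bigcup_sub_cball Xmono Xb r_le.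
  exact: circumradius_le (le_trans (circumradius_ge0 _) (r_le 0%N)) Uc.
by apply: ge_sup; [exists (r 0%N), 0%N | move=> _ [n _ <-]].
Qed.

End EnclosingBalls.

Section EnclosingBallMeasure.
Variables (R : realType) (N : nat).
Notation V := 'rV[R]_N.
Local Notation leb := (@lebN R N).
Local Notation eb := (@enclosing_ball R N).
Implicit Types (A B Y Z : set V) (a b c x y : V) (r : R).

Lemma box_vol_ge0 a b : 0 <= box_vol a b.
Proof. by apply: prodr_ge0 => i _; rewrite le_max lexx orbT. Qed.

Lemma box_vol_pt a : (0 < N)%N -> box_vol a a = 0.
Proof.
move=> N0; rewrite /box_vol (bigD1 (Ordinal N0)) //= subrr.
by rewrite (_ : Num.max 0 0 = 0) ?mul0r // maxxx.
Qed.

Lemma box_vol_scale a b c r : 0 < r ->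
  box_vol (c + r *: a) (c + r *: b) = r ^+ N * box_vol a b.
Proof.
move=> r0; rewrite /box_vol -[in r ^+ N](card_ord N) -prodrMl.
apply: eq_bigr => i _; rewrite !mxE.
have -> : c ord0 i + r * b ord0 i - (c ord0 i + r * a ord0 i) =
  r * (b ord0 i - a ord0 i) by ring.
by rewrite maxr_pMr ?ltW // mulr0.
Qed.

Lemma lebN_ge0 A : (0 <= leb A)%E.
Proof.
apply: le_ereal_inf_tmp => _ [a [b [_ ->]]].
by apply: nneseries_ge0 => k _ _; rewrite lee_fin box_vol_ge0.
Qed.

Lemma le_lebN A B : A `<=` B -> (leb A <= leb B)%E.
Proof.
move=> AB; apply: ereal_inf_le_tmp => _ [a [b [cov ->]]].
by exists a, b; split => //; apply: subset_trans cov.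
Qed.

Lemma lebN_box_le a b : (0 < N)%N -> (leb (box a b) <= (box_vol a b)%:E)%E.
Proof.
move=> N0; pose b' k := if k == 0%N then b else a.
apply: (@le_trans _ _ (\sum_(0 <= k <oo) (box_vol a (b' k))%:E)%E).
  by apply: ereal_inf_lbound; exists (fun=> a), b'; split => // y aby; exists 0%N.
rewrite (nneseries_split 0 1); last by move=> k _; rewrite lee_fin box_vol_ge0.
rewrite eseries0 ?adde0 ?big_nat1 // => k k1 _.
by rewrite /b' (negbTE (lt0n_neq0 k1)) box_vol_pt.
Qed.

Lemma lebN_set1 c : (0 < N)%N -> leb [set c] = 0%E.
Proof.
move=> N0; apply/le_anti; rewrite lebN_ge0 andbT.
apply: (@le_trans _ _ (leb (box c c))); first by apply: le_lebN => _ -> i; rewrite lexx.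
by apply: le_trans (lebN_box_le c c N0) _; rewrite box_vol_pt.
Qed.

Lemma lebN_scale_le A c r : 0 < r ->
  (leb [set (c + r *: x)%R | x in A] <= (r ^+ N)%:E * leb A)%E.
Proof.
move=> r0; have rN0 : 0 < r ^+ N := exprn_gt0 N r0.
rewrite -lee_pdivrMl //; apply: le_ereal_inf_tmp => _ [a [b [cov ->]]].
rewrite lee_pdivrMl // -nneseriesZl; last by move=> k _; rewrite lee_fin box_vol_ge0.
apply: ereal_inf_lbound; exists (fun k => c + r *: a k), (fun k => c + r *: b k).
split; last by apply: eq_eseriesr => k _; rewrite box_vol_scale.
by move=> _ [x /cov[k _ abx] <-]; exists k => // i; rewrite !mxE !lerD2l !ler_pM2l.
Qed.

Definition unit_ball_vol : R := fine (leb (cball 0 1)).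

Lemma unit_ball_vol_ge0 : 0 <= unit_ball_vol.
Proof. exact: fine_ge0 (lebN_ge0 _). Qed.

Lemma lebN_unit_ball : (0 < N)%N -> leb (cball 0 1) = unit_ball_vol%:E.
Proof.
move=> N0; rewrite fineK // ge0_fin_numE ?lebN_ge0 //.
apply: (@le_lt_trans _ _ (leb (box (- const_mx 1) (const_mx 1)))).
  apply: le_lebN => y /cballP[_ y1] i; rewrite !mxE.
  have := le_trans (coord_sqr_le_d2 0 y i) y1; rewrite mxE sub0r sqrrN expr1n.
  by move=> y1_sqr; apply/andP; split; nra.
by apply: le_lt_trans (lebN_box_le _ _ N0) _; exact: ltry.
Qed.

Lemma lebN_cball c r : (0 < N)%N -> 0 <= r ->
  leb (cball c r) = (r ^+ N * unit_ball_vol)%:E.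
Proof.
move=> N0; rewrite le_eqVlt => /orP[/eqP<-|r0].
  by rewrite cball0 lebN_set1 // expr0n gtn_eqF // mul0r.
have := lebN_scale_le (cball 0 1) c r0.
rewrite image_cball // scaler0 addr0 mulr1 lebN_unit_ball // -EFinM => le_ball.
have rV0 : 0 < r^-1 by rewrite invr_gt0.
have := lebN_scale_le (cball c r) (- (r^-1 *: c)) rV0.
rewrite image_cball // addNr mulVf ?gt_eqF // lebN_unit_ball //.
rewrite exprVn lee_pdivlMl ?exprn_gt0 // -EFinM => ge_ball.
by apply/le_anti; rewrite le_ball ge_ball.
Qed.

(* An [eps / 2 ^ (j+1)]-cover of each [A j], reindexed along a bijection
   [nat -> nat * nat], covers the union with total volume at most [eps]. *)
Lemma lebN_bigcup_null (A : nat -> set V) :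
  (forall j, leb (A j) = 0%E) -> leb (\bigcup_j A j) = 0%E.
Proof.
move=> A0; apply/eqP; rewrite eq_le lebN_ge0 andbT.
apply/lee_addgt0Pr => eps eps0; rewrite add0e.
have /choice[f Af] j : exists ab : (nat -> V) * (nat -> V),
    A j `<=` \bigcup_k box (ab.1 k) (ab.2 k) /\
    (\sum_(0 <= k <oo) (box_vol (ab.1 k) (ab.2 k))%:E <=
       (eps / (2 ^ j.+1)%:R)%:E)%E.
  have : (leb (A j) < (eps / (2 ^ j.+1)%:R)%:E)%E.
    by rewrite A0 lte_fin divr_gt0 // ltr0n expn_gt0.
  move=> /ereal_inf_lt [_ [a [b [cov ->]]] lt].
  by exists (a, b); split => //; exact: ltW.
have : ([set: nat] #= [set: nat * nat])%card by apply: card_esym; exact: card_nat2.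
case/pcard_eqP => e; have ebij : set_bij [set: nat] [set: nat * nat] e by exact: bij.
pose g (p : nat * nat) := (box_vol ((f p.1).1 p.2) ((f p.1).2 p.2))%:E.
have g0 p : (0 <= g p)%E by rewrite lee_fin box_vol_ge0.
apply: (@le_trans _ _ (\sum_(0 <= k <oo) g (e k))%E).
  apply: ereal_inf_lbound.
  exists (fun k => (f (e k).1).1 (e k).2), (fun k => (f (e k).1).2 (e k).2).
  split => // y [j _ /(Af j).1 [i _ yi]].
  have [k _ ek] := set_bij_surj ebij (I : setT (j, i)).
  by exists k => //; rewrite ek.
rewrite nneseries_esumT // -(@reindex_esum R _ _ setT setT e g ebij).
have -> : [set: nat * nat] = [set: nat] `*`` (fun=> [set: nat]).
  by apply/seteqP; split => // -[].
rewrite (_ : \esum_(k in _) g k = \esum_(k in [set: nat] `*`` (fun=> [set: nat])) g (k.1, k.2))%E; last by apply: eq_esum => -[].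
rewrite -(@esum_esum R _ _ setT (fun=> setT) (fun j i => g (j, i))) //.
apply: (@le_trans _ _ (\sum_(0 <= j <oo) (eps / (2 ^ j.+1)%:R)%:E)%E); last first.
  exact: epsilon_trick0 (ltW eps0).
rewrite nneseries_esumT; last by move=> j; rewrite lee_fin divr_ge0 // ltW.
by apply: le_esum => j _; rewrite -nneseries_esumT //; exact: (Af j).2.
Qed.

Lemma lebN_dim0 A : N = 0%N -> leb A = leb setT.
Proof.
move=> N0; rewrite /lebN; congr ereal_inf; apply/seteqP.
by split=> _ [a [b [_ ->]]]; exists a, b; split => // y _; exists 0%N => // i;
  move: (ltn_ord i); rewrite {2}N0.
Qed.

Lemma enclosing_ball_unbounded Y : ~ ebounded Y -> eb Y = setT.
Proof.
move=> Yb; rewrite /enclosing_ball; case: pselect => [Y0|_]; last by case: pselect.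
by exfalso; apply: Yb; rewrite Y0; exists 0.
Qed.

Lemma enclosing_ballE Y : Y !=set0 -> ebounded Y ->
  exists c, eb Y = cball c (circumradius Y).
Proof.
move=> [y Yy] Yb; have [c Yc] := exists_cball_circumradius Yb.
have Ymin : is_min_ball Y (cball c (circumradius Y)).
  exists c, (circumradius Y); split; first exact: circumradius_ge0.
  by split=> //; split=> // c' r'; exact: circumradius_le.
rewrite /enclosing_ball; case: pselect => [Y0|_]; first by rewrite Y0 in Yy.
case: pselect => // _.
have [c' [r' [r'0 [-> [Yc' r'min]]]]] := xgetPex setT (ex_intro _ _ Ymin).
exists c'; congr cball; apply/le_anti.
by rewrite (circumradius_le r'0 Yc') (r'min c) // circumradius_ge0.
Qed.

Lemma lebN_enclosing_ball Y : (0 < N)%N -> ebounded Y ->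
  leb (eb Y) = (circumradius Y ^+ N * unit_ball_vol)%:E.
Proof.
move=> N0 Yb; have [->|/set0P Yne] := eqVneq Y set0.
  have -> : circumradius (@set0 V) = 0.
    by apply/le_anti; rewrite circumradius_ge0 (@circumradius_le _ _ _ 0 0 (lexx _) (sub0set _)).
  rewrite expr0n gtn_eqF // mul0r /enclosing_ball.
  by case: pselect => // _; exact: lebN_set1.
have [c ->] := enclosing_ballE Yne Yb; exact: lebN_cball (circumradius_ge0 _).
Qed.

Lemma le_lebN_enclosing_ball Y Z : Y `<=` Z -> (leb (eb Y) <= leb (eb Z))%E.
Proof.
move=> YZ; have [N0|N0] := posnP N; first by rewrite !(lebN_dim0 _ N0).
have [Zb|Zb] := pselect (ebounded Z); last first.
  by rewrite (enclosing_ball_unbounded Zb); exact: le_lebN.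
rewrite !lebN_enclosing_ball //; last exact: sub_ebounded Zb.
rewrite lee_fin ler_wpM2r ?unit_ball_vol_ge0 //.
by rewrite lerXn2r ?nnegrE ?circumradius_ge0 // le_circumradius.
Qed.

Lemma lebN_setT_le_sup X : (0 < N)%N ->
  {homo X : n m / (n <= m)%N >-> n `<=` m} -> ~ ebounded (\bigcup_n X n) ->
  (leb setT <= ereal_sup (range (fun n => leb (eb (X n)))))%E.
Proof.
move=> N0 Xmono Unb; set S := ereal_sup _.
have S_ge n : (leb (eb (X n)) <= S)%E by apply: ereal_sup_ubound; exists n.
have S0 : (0 <= S)%E := le_trans (lebN_ge0 _) (S_ge 0%N).
have [[n /enclosing_ball_unbounded Xn]|/forallNP Xb] :=
  pselect (exists n, ~ ebounded (X n)); first by rewrite -Xn.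
have {}Xb n : ebounded (X n) by exact: contrapT (Xb n).
(* [unit_ball_vol] is in fact positive; treating the case [unit_ball_vol = 0]
   directly avoids the lower bound on [lebN] that a proof of this would need. *)
have [K0|K0] := eqVneq unit_ball_vol 0.
  rewrite -bigcup_cball0 lebN_bigcup_null // => j.
  by rewrite lebN_cball // K0 mulr0.
have {}K0 : 0 < unit_ball_vol by rewrite lt_neqAle eq_sym K0 unit_ball_vol_ge0.
have [S_fin|] := boolP (S \is a fin_num); last first.
  by rewrite ge0_fin_numE // -leNgt leye_eq => /eqP->; exact: leey.
(* A finite bound on the measures bounds the radii, hence the union. *)
have r_le1DXn r : 0 <= r -> r <= 1 + r ^+ N.
  move=> r0; have [r1|/ltW r1] := leP r 1.
    by apply: le_trans r1 _; rewrite lerDl exprn_ge0.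
  by apply: le_trans (ler_eXnr N0 r1) _; rewrite lerDr.
have [|c Uc] := @bigcup_sub_cball _ _ X (1 + fine S / unit_ball_vol) Xmono Xb.
  move=> n; apply: le_trans (r_le1DXn _ (circumradius_ge0 _)) _.
  rewrite lerD2l ler_pdivlMr //; have := S_ge n.
  by rewrite lebN_enclosing_ball // -(fineK S_fin) lee_fin.
by exfalso; apply: Unb; exact: sub_ebounded Uc (cball_ebounded _ _).
Qed.

Lemma lebN_enclosing_ball_bigcup X : {homo X : n m / (n <= m)%N >-> n `<=` m} ->
  leb (eb (\bigcup_n X n)) = ereal_sup (range (fun n => leb (eb (X n)))).
Proof.
move=> Xmono; set U := \bigcup_n X n.
have [N0|N0] := posnP N.
  have -> : (fun n => leb (eb (X n))) = cst (leb setT).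
    by apply/funext => n; exact: lebN_dim0.
  by rewrite lebN_dim0 // ereal_sup_cst // setT0.
have [Ub|Unb] := pselect (ebounded U); last first.
  rewrite enclosing_ball_unbounded //; apply/le_anti/andP; split.
    exact: lebN_setT_le_sup.
  by apply: ge_ereal_sup => _ [n _ <-]; exact: le_lebN.
have m_mono : nondecreasing_seq (fun n => leb (eb (X n))).
  by move=> n k nk; exact: le_lebN_enclosing_ball (Xmono _ _ nk).
apply: (cvg_unique (@ereal_hausdorff R) _ (ereal_nondecreasing_cvgn m_mono)).
have Xb n : ebounded (X n) by apply: sub_ebounded Ub => x Xx; exists n.
have -> : (fun n => leb (eb (X n))) =
    (fun n => (circumradius (X n) ^+ N * unit_ball_vol)%:E).
  by apply/funext => n; exact: lebN_enclosing_ball.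
rewrite lebN_enclosing_ball //; apply: cvg_EFin; first exact: nearW.
by apply: cvgMl; apply: cvg_exprn; exact: cvg_circumradius_bigcup.
Qed.

End EnclosingBallMeasure.

Theorem lemma9 (R : realType) (N : nat) (X : nat -> set 'rV[R]_N)
  (hX : forall n, X n `<=` X n.+1) :
  (fun n => lebN (enclosing_ball (X n))) @ \oo
     --> lebN (enclosing_ball (\bigcup_n X n)) /\
  lebN (enclosing_ball (\bigcup_n X n)) =
     ereal_sup (range (fun n => lebN (enclosing_ball (X n)))).
Proof.
have Xmono : {homo X : n m / (n <= m)%N >-> n `<=` m}.
  move=> n m /subnK <-; elim: (m - n)%N => // d IH.
  by rewrite addSn; exact: subset_trans IH (hX _).
rewrite lebN_enclosing_ball_bigcup //; split => //.
apply: ereal_nondecreasing_cvgn => n m nm.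
exact: le_lebN_enclosing_ball (Xmono _ _ nm).
Qed.
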